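(* Let $\mathcal{B}$ be a spherical building and $C$ a chamber of $\mathcal{B}$. Then $\mathrm{Opp}(C)$ is a flag complex.
   Context: $\mathrm{Opp}(C)$ denotes the subcomplex of $\mathcal{B}$ consisting of the simplices opposite to $C$, i.e. the chambers opposite to $C$ and their faces; two chambers are opposite if in an apartment containing both they lie on opposite sides of every wall. A simplicial complex is flag if every finite set of vertices that are pairwise joined by edges spans a simplex. *)

(* Spherical buildings via the W-metric (Weyl distance)
   definition of Abramenko--Brown, Def. 5.1, with a finite Coxeter group W. *)
From mathcomp Require Import all_boot all_fingroup.
Set Implicit Arguments. Unset Strict Implicit. Unset Printing Implicit Defensive.
Local Open Scope group_scope.

(* An abstract (possibly infinite) group, used as target of the universal
   property of a Coxeter presentation. *)
Definition is_group (G : Type) (mul : G -> G -> G) (one : G) (inv : G -> G) :=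
  [/\ forall x y z, mul x (mul y z) = mul (mul x y) z,
      forall x, mul one x = x, forall x, mul x one = x,
      forall x, mul (inv x) x = one & forall x, mul x (inv x) = one].

Fixpoint gpow (G : Type) (mul : G -> G -> G) (one : G) (x : G) (n : nat) : G :=
  if n is n'.+1 then mul x (gpow mul one x n') else one.

(* (W,S) is a Coxeter system: S is a set of involutions generating W, and W is
   presented by S subject to the relations (s t)^m(s,t) = 1, m(s,t) = #[s t]
   (universal property with respect to every group). *)
Definition coxeter_system (W : finGroupType) (S : {set W}) : Prop :=
  [/\ 1 \notin S, {in S, forall s, s * s = 1}, <<S>> = [set: W] &
      forall (G : Type) (mul : G -> G -> G) (one : G) (inv : G -> G),
        is_group mul one inv ->
        forall f : W -> G,
          {in S &, forall s t, gpow mul one (mul (f s) (f t)) #[s * t] = one} ->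
          exists phi : W -> G,
            (forall x y, phi (x * y) = mul (phi x) (phi y)) /\
            {in S, forall s, phi s = f s}].

Definition Sball (W : finGroupType) (S : {set W}) (n : nat) : {set W} :=
  iter n (fun A => A * (1 |: S)) [set 1].

(* Word length l_S(w) (for w in <<S>> = W, this is < #|W|). *)
Definition lengthS (W : finGroupType) (S : {set W}) (w : W) : nat :=
  find (fun n => w \in Sball S n) (iota 0 #|W|).

Definition is_building (W : finGroupType) (S : {set W}) (Ch : Type)
    (delta : Ch -> Ch -> W) : Prop :=
  [/\ forall C D, delta C D = 1 <-> C = D,
      (forall C D C' s, s \in S -> delta C' C = s ->
          (delta C' D = s * delta C D \/ delta C' D = delta C D) /\
          (lengthS S (s * delta C D) = (lengthS S (delta C D)).+1 ->
             delta C' D = s * delta C D)) &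
      forall C D s, s \in S ->
          exists C', delta C' C = s /\ delta C' D = s * delta C D].

Definition opposite (W : finGroupType) (S : {set W}) (Ch : Type)
    (delta : Ch -> Ch -> W) (C D : Ch) : Prop :=
  forall w : W, lengthS S w <= lengthS S (delta C D).

(* The vertex of type s of the chamber D is the (S \ {s})-residue of D.
   [has_vertex s D E] : the chamber E contains this vertex. *)
Definition has_vertex (W : finGroupType) (S : {set W}) (Ch : Type)
    (delta : Ch -> Ch -> W) (s : W) (D E : Ch) : Prop :=
  delta D E \in <<S :\ s>>.

(* Opp(C) is a flag complex: a finite family of vertices (given as
   (type, chamber) pairs) that are vertices of Opp(C) and pairwise joined by
   edges of Opp(C) (i.e. pairwise contained in a chamber opposite C) spans a
   simplex of Opp(C) (i.e. all lie in a common chamber opposite C). *)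
Definition Opp_is_flag (W : finGroupType) (S : {set W}) (Ch : Type)
    (delta : Ch -> Ch -> W) (C : Ch) : Prop :=
  forall (I : finType) (typ : I -> W) (ch : I -> Ch),
    (forall i, typ i \in S) ->
    (forall i j, exists E, opposite S delta C E /\
        has_vertex S delta (typ i) (ch i) E /\ has_vertex S delta (typ j) (ch j) E) ->
    exists E, opposite S delta C E /\
      forall i, has_vertex S delta (typ i) (ch i) E.

From mathcomp Require Import all_boot all_fingroup.
Set Implicit Arguments. Unset Strict Implicit. Unset Printing Implicit Defensive.
Local Open Scope group_scope.

(* Vertices of Opp(C) pairwise joined by edges are in particular pairwise
   adjacent in the building.  Projecting a chamber that contains the first k
   of them onto the residue of the next one gives a chamber containing k+1 of
   them, since the projection of D onto a residue R lies in every residue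
   that meets R and contains D; so some chamber D contains all the vertices
   v_i.  Each v_i also lies in a chamber E_i opposite C, and as the longest
   element w0 of W is unique, delta C E_i = w0.  Hence w0^-1 * delta C D lies
   in the parabolic subgroup W_(S \ type v_i) for every i, so in W_K where K
   is the intersection of these sets, and moving D by it inside its K-residue
   gives a chamber at distance w0 from C still containing every v_i.  The
   Coxeter group facts used (exchange condition, uniqueness of w0, length
   additivity over minimal coset representatives, intersection of parabolic
   subgroups) are derived from the presentation through Tits' representation
   of W on reflections with signs. *)

Section Words.
Variable gT : finGroupType.
Implicit Types (A : {set gT}) (ws : seq gT).

Definition wprod ws : gT := foldr *%g 1 ws.

Lemma wprod_cat ws vs : wprod (ws ++ vs) = wprod ws * wprod vs.
Proof. by elim: ws => [|x ws IH] /=; rewrite ?mul1g // IH mulgA. Qed.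

Lemma wprod_rcons ws x : wprod (rcons ws x) = wprod ws * x.
Proof. by rewrite -cats1 wprod_cat /= mulg1. Qed.

Lemma wprod_gen A ws : all (mem A) ws -> wprod ws \in <<A>>.
Proof.
elim: ws => [|x ws IH] /=; first by rewrite group1.
by case/andP=> Ax /IH; apply: groupM; apply: mem_gen.
Qed.

Lemma gen_wprod A x : x \in <<A>> -> exists2 ws, all (mem A) ws & wprod ws = x.
Proof.
case/gen_prodgP=> n [c Ac ->]; exists [seq c i | i <- index_enum 'I_n].
  by apply/allP=> _ /mapP[i _ ->]; apply: Ac.
by elim: (index_enum _) => [|i r IH]; rewrite ?big_nil ?big_cons //= IH.
Qed.

Fixpoint alt x y n : seq gT := if n is n'.+1 then x :: y :: alt x y n' else [::].

Lemma wprod_alt x y n : wprod (alt x y n) = (x * y) ^+ n.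
Proof. by elim: n => [|n IH] //=; rewrite IH expgS mulgA. Qed.

Lemma gpowE (x : gT) n : gpow *%g 1 x n = x ^+ n.
Proof. by elim: n => //= n ->; rewrite expgS. Qed.

Definition rem_nth j ws := take j ws ++ drop j.+1 ws.

Lemma size_rem_nth j ws : j < size ws -> size (rem_nth j ws) = (size ws).-1.
Proof.
move=> lt_j; rewrite size_cat size_take size_drop lt_j.
by rewrite -[in RHS](subnKC lt_j).
Qed.

Lemma rem_nth_cat j ws vs : rem_nth j (ws ++ vs) =
  if j < size ws then rem_nth j ws ++ vs else ws ++ rem_nth (j - size ws) vs.
Proof.
elim: ws j => [|x ws IH] [|j] //=; first by rewrite /rem_nth /= !drop0.
by rewrite [LHS]/rem_nth /= -/(rem_nth j _) IH ltnS subSS; case: ifP.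
Qed.

Lemma all_rem_nth (p : pred gT) j ws : all p ws -> all p (rem_nth j ws).
Proof.
by move/allP=> p_ws; apply/allP=> x; rewrite mem_cat => /orP[/mem_take|/mem_drop]/p_ws.
Qed.

Lemma Sball_S A n : Sball A n.+1 = Sball A n * (1 |: A).
Proof. by []. Qed.

Lemma Sball1 A n : 1 \in Sball A n.
Proof.
elim: n => [|n IH]; first exact: set11.
by rewrite Sball_S; apply/mulsgP; exists 1 1; rewrite ?setU11 ?mulg1.
Qed.

Lemma Sball_sub A n : Sball A n \subset Sball A n.+1.
Proof.
by apply/subsetP=> x Sx; rewrite Sball_S; apply/mulsgP; exists x 1; rewrite ?setU11 ?mulg1.
Qed.

Lemma Sball_homo A m n : m <= n -> Sball A m \subset Sball A n.
Proof.
move/subnK <-; elim: (n - m) => [|k IH] //.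
by apply: subset_trans IH _; rewrite addSn Sball_sub.
Qed.

Lemma wprod_Sball A ws : all (mem A) ws -> wprod ws \in Sball A (size ws).
Proof.
elim/last_ind: ws => [|ws x IH]; first by rewrite Sball1.
rewrite all_rcons size_rcons wprod_rcons => /andP[Ax /IH ws_n].
by rewrite Sball_S mem_mulg ?setU1r.
Qed.

Lemma Sball_wprod A n x :
  x \in Sball A n -> exists ws, [/\ all (mem A) ws, size ws <= n & wprod ws = x].
Proof.
elim: n x => [|n IH] x; first by rewrite inE => /eqP ->; exists [::].
rewrite Sball_S => /mulsgP[y a /IH[ws [A_ws le_ws <-]] /setU1P[->|Aa] ->].
  by exists ws; rewrite mulg1 leqW.
by exists (rcons ws a); rewrite all_rcons size_rcons wprod_rcons; split=> //; exact/andP.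
Qed.

Lemma Sball_stable A : exists2 m, m < #|gT| & forall n, Sball A n \subset Sball A m.
Proof.
have [m fix_m | no_fix] := pickP (fun i : 'I_#|gT| => Sball A i.+1 \subset Sball A i).
  exists m => // n; have [/Sball_homo // | lt_mn] := leqP n m.
  rewrite -(subnKC (ltnW lt_mn)); elim: (n - m) => [|k IH]; first by rewrite addn0.
  by rewrite addnS Sball_S (subset_trans _ fix_m) // Sball_S mulSg.
suff: #|gT| < #|Sball A #|gT| | by rewrite ltnNge max_card.
elim: {-2}#|gT| (leqnn #|gT|) => [|n IH] lt_n; first by rewrite cards1.
apply: leq_ltn_trans (IH (ltnW lt_n)) (proper_card _).
by rewrite properE Sball_sub (no_fix (Ordinal lt_n)).
Qed.

Lemma gen_Sball A : exists2 m, m < #|gT| & <<A>> \subset Sball A m.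
Proof.
have [m lt_m Sball_m] := Sball_stable A; exists m => //.
apply/subsetP=> x /gen_wprod[ws A_ws <-].
exact: subsetP (Sball_m _) _ (wprod_Sball A_ws).
Qed.

End Words.

Section CoxeterSystem.
Variables (W : finGroupType) (S : {set W}).
Hypothesis S1 : 1 \notin S.
Hypothesis SV : {in S, forall s, s * s = 1}.
Hypothesis Sgen : <<S>> = [set: W].
Local Notation len := (lengthS S).
Implicit Types (J : {set W}) (ws : seq W).

Lemma invS s : s \in S -> s^-1 = s.
Proof. by move=> Ss; apply/eqP; rewrite eq_invg_mul SV. Qed.

Lemma wprod_rev ws : all (mem S) ws -> wprod (rev ws) = (wprod ws)^-1.
Proof.
elim: ws => [|s ws IH] /=; first by rewrite invg1.
by case/andP=> Ss /IH; rewrite rev_cons wprod_rcons invMg (invS Ss) => ->.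
Qed.

Lemma len_wprod ws : all (mem S) ws -> len (wprod ws) <= size ws.
Proof.
move=> S_ws; have [lt_ws | ge_ws] := ltnP (size ws) #|W|.
  rewrite leqNgt; apply/negP => /(before_find 0).
  by rewrite nth_iota // add0n wprod_Sball.
by apply: leq_trans (find_size _ _) _; rewrite size_iota.
Qed.

Lemma reduced_word w : exists ws, [/\ all (mem S) ws, wprod ws = w & size ws = len w].
Proof.
have [m lt_m /subsetP Sball_m] := gen_Sball S.
have has_w : has (fun n => w \in Sball S n) (iota 0 #|W|).
  by apply/hasP; exists m; rewrite ?mem_iota ?Sball_m ?Sgen ?inE.
have := nth_find 0 has_w; rewrite nth_iota -/(len w) ?add0n; last first.
  by rewrite -(size_iota 0 #|W|) -has_find.
case/Sball_wprod=> ws [S_ws le_ws ws_w]; exists ws; split=> //.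
by apply/eqP; rewrite eqn_leq le_ws -ws_w len_wprod.
Qed.

Lemma len1 : len 1 = 0.
Proof. by apply/eqP; rewrite -leqn0 (@len_wprod [::]). Qed.

Lemma len_eq0 w : len w = 0 -> w = 1.
Proof. by have [[|s ws] [_ <- <-]] := reduced_word w. Qed.

Lemma lenM x y : len (x * y) <= len x + len y.
Proof.
have [xs [S_xs <- <-]] := reduced_word x; have [ys [S_ys <- <-]] := reduced_word y.
by rewrite -wprod_cat -size_cat len_wprod // all_cat S_xs.
Qed.

Lemma lenV x : len x^-1 = len x.
Proof.
suff le_lenV y : len y^-1 <= len y.
  by apply/eqP; rewrite eqn_leq le_lenV -{1}[x]invgK le_lenV.
have [ys [S_ys <- <-]] := reduced_word y.
by rewrite -wprod_rev // -(size_rev ys) len_wprod // all_rev.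
Qed.

Lemma len_gen s : s \in S -> len s = 1%N.
Proof.
move=> Ss; have := @len_wprod [:: s]; rewrite /= mulg1 Ss => /(_ isT) le_s1.
apply/eqP; rewrite eqn_leq le_s1 lt0n.
by apply: contraNneq S1 => /len_eq0 <-.
Qed.

Lemma lenSM s w : s \in S -> len (s * w) <= (len w).+1.
Proof. by move=> Ss; apply: leq_trans (lenM _ _) _; rewrite len_gen. Qed.

Definition tits_fun s (p : W * bool) := (s^-1 * p.1 * s, p.2 (+) (p.1 == s)).

Lemma tits_fun_inj s : injective (tits_fun s).
Proof. by move=> [x b] [y c] [/mulIg/mulgI <-]; case: b c (x == s) => [] [] []. Qed.

Definition tits s : {perm W * bool} := perm (@tits_fun_inj s).

Fixpoint reflections ws :=
  if ws is s :: ws' then s :: [seq s * t * s^-1 | t <- reflections ws'] else [::].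

Lemma size_reflections ws : size (reflections ws) = size ws.
Proof. by elim: ws => //= s ws IH; rewrite size_map IH. Qed.

Lemma tits_wprodE ws x b : wprod (map tits ws) (x, b) =
  ((wprod ws)^-1 * x * wprod ws, b (+) odd (count_mem x (reflections ws))).
Proof.
elim: ws x b => [|s ws IH] x b /=; first by rewrite perm1 invg1 mul1g mulg1 addbF.
rewrite permM permE /tits_fun /= IH invMg !mulgA count_map oddD oddb addbA (eq_sym s).
congr (_, _ (+) odd _); apply: eq_count => t /=.
by apply/eqP/eqP => [->|<-]; rewrite !mulgA ?mulgV ?mulVg mul1g ?mulgK ?mulgKV.
Qed.

Lemma reflections_alt s t n : s \in S -> t \in S ->
  reflections (alt s t n) = [seq (s * t) ^+ j * s | j <- iota 0 n.*2].
Proof.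
move=> Ss St; elim: n => [|n IH] //=.
rewrite IH -!map_comp expg1 (invS Ss) (iotaDl 2 0) -map_comp; congr [:: _, _ & _].
  by rewrite mul1g.
apply: eq_map => j /=; rewrite (invS St) addnC expgD expgS expg1 !mulgA.
by rewrite (commuteX j (commute_refl (s * t))) !mulgA.
Qed.

Lemma tits_braid s t : s \in S -> t \in S -> (tits s * tits t) ^+ #[s * t] = 1.
Proof.
move=> Ss St; set n := #[s * t].
have -> : (tits s * tits t) ^+ n = wprod (map tits (alt s t n)).
  by rewrite -wprod_alt; elim: n => //= n ->.
apply/permP=> -[x b]; rewrite tits_wprodE wprod_alt expg_order invg1 mul1g mulg1 perm1.
rewrite reflections_alt // -addnn iotaD add0n.
have -> : iota n n = map (addn n) (iota 0 n) by rewrite -iotaDl addn0.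
rewrite map_cat -map_comp count_cat.
rewrite (@eq_map _ _ (_ \o _) (fun j => (s * t) ^+ j * s)) => [|j /=].
  by rewrite addnn odd_double addbF.
by rewrite expgD expg_order mul1g.
Qed.

Lemma reflections_rem_nth ws j : all (mem S) ws -> j < size ws ->
  nth 1 (reflections ws) j * wprod ws = wprod (rem_nth j ws).
Proof.
elim: ws j => [|s ws IH] [|j] //= /andP[Ss S_ws] lt_j.
  by rewrite mulgA SV // mul1g /rem_nth /= drop0.
by rewrite (nth_map 1) ?size_reflections // mulgA mulgKV -mulgA IH.
Qed.

Lemma len_rem_nth ws j : all (mem S) ws -> j < size ws ->
  len (wprod (rem_nth j ws)) < size ws.
Proof.
move=> S_ws lt_j; rewrite (leq_ltn_trans (len_wprod (all_rem_nth j S_ws))) //.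
by rewrite size_rem_nth // prednK // (leq_ltn_trans _ lt_j).
Qed.

Lemma reduced_behead s ws : all (mem S) (s :: ws) ->
  size (s :: ws) = len (wprod (s :: ws)) -> size ws = len (wprod ws).
Proof.
case/andP=> Ss S_ws red_sws; apply/eqP; rewrite eqn_leq len_wprod // andbT.
by have := lenSM (wprod ws) Ss; rewrite -red_sws.
Qed.

Lemma uniq_reflections ws : all (mem S) ws -> size ws = len (wprod ws) ->
  uniq (reflections ws).
Proof.
elim: ws => [|s ws IH] //= S_sws red_sws; have /andP[Ss S_ws] := S_sws.
rewrite map_inj_uniq ?IH ?(reduced_behead S_sws) //; last by move=> t1 t2 /mulIg/mulgI.
rewrite andbT; apply/mapP=> -[t refl_t /(congr1 (fun z => z * s))].
rewrite mulgKV => /mulgI s_t; rewrite -s_t in refl_t.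
have lt_j : index s (reflections ws) < size ws by rewrite -size_reflections index_mem.
have := len_rem_nth S_ws lt_j; rewrite -reflections_rem_nth // nth_index //.
by rewrite -red_sws ltnNge leqnSn.
Qed.

Section TitsRepresentation.
Variable phi : W -> {perm W * bool}.
Hypothesis phiM : {morph phi : x y / x * y}.
Hypothesis phiS : {in S, forall s, phi s = tits s}.

(* The sign component of phi; by eta_wprod it is the parity of the number of
   occurrences of t in the reflection sequence of any S-word for w. *)
Definition eta w t := (phi w (t, false)).2.

Lemma phi_wprod ws : all (mem S) ws -> phi (wprod ws) = wprod (map tits ws).
Proof.
elim: ws => [|s ws IH] /=; last by case/andP=> Ss /IH <-; rewrite phiM phiS.
by move=> _; apply: (mulgI (phi 1)); rewrite -phiM !mulg1.
Qed.

Lemma phiE w x b : phi w (x, b) = (w^-1 * x * w, b (+) eta w x).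
Proof.
have [ws [S_ws <- _]] := reduced_word w.
by rewrite /eta phi_wprod // !tits_wprodE.
Qed.

Lemma eta_wprod ws t : all (mem S) ws ->
  eta (wprod ws) t = odd (count_mem t (reflections ws)).
Proof. by move=> S_ws; rewrite /eta phi_wprod // tits_wprodE. Qed.

Lemma etaM x y t : eta (x * y) t = eta x t (+) eta y (x^-1 * t * x).
Proof. by rewrite /eta phiM permM phiE /= phiE. Qed.

Lemma eta_gen s : s \in S -> eta s s.
Proof. by move=> Ss; rewrite /eta phiS // permE /= eqxx. Qed.

Lemma eta_refl y s : s \in S -> eta (y * s * y^-1) (y * s * y^-1).
Proof.
move=> Ss; set t := y * s * y^-1.
have tyy : y^-1 * t * y = s by rewrite /t !mulgA mulVg mul1g mulgKV.
have := etaM y y^-1 t; rewrite mulgV tyy (@eta_wprod [::]) //= => eta_y.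
by rewrite {1}/t -mulgA !etaM tyy eta_gen // mulVg mul1g addbCA -eta_y.
Qed.

Lemma eta_reduced ws t : all (mem S) ws -> size ws = len (wprod ws) ->
  eta (wprod ws) t = (t \in reflections ws).
Proof.
by move=> S_ws red_ws; rewrite eta_wprod // count_uniq_mem ?uniq_reflections // oddb.
Qed.

Lemma eta_lt w t : eta w t -> len (t * w) < len w.
Proof.
have [ws [S_ws <- red_ws]] := reduced_word w; rewrite eta_reduced // => refl_t.
have lt_j : index t (reflections ws) < size ws by rewrite -size_reflections index_mem.
by rewrite -{1}(nth_index 1 refl_t) reflections_rem_nth // -red_ws len_rem_nth.
Qed.

Lemma eta_gt y s w : s \in S -> ~~ eta w (y * s * y^-1) ->
  len w < len (y * s * y^-1 * w).
Proof.
move=> Ss; set t := y * s * y^-1 => not_eta_w.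
have tt : t * t = 1 by rewrite /t !mulgA mulgKV -(mulgA y) SV // mulg1 mulgV.
have : eta (t * w) t by rewrite etaM eta_refl // mulVg mul1g (negbTE not_eta_w).
by move/eta_lt; rewrite mulgA tt mul1g.
Qed.

Lemma eta_descent s w : s \in S -> eta w s = (len (s * w) < len w).
Proof.
move=> Ss; have [/eta_lt -> // | not_eta_w] := boolP (eta w s).
have := @eta_gt 1 s w Ss; rewrite mul1g invg1 mulg1 => /(_ not_eta_w) lt_w_sw.
by rewrite ltnNge (ltnW lt_w_sw).
Qed.

Lemma len_mulS s w : s \in S -> len (s * w) = (len w).+1 \/ len w = (len (s * w)).+1.
Proof.
move=> Ss; have ssx x : s * (s * x) = x by rewrite mulgA SV ?mul1g.
have desc x : eta x s -> len x = (len (s * x)).+1.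
  by move/eta_lt=> lt_sx; apply/eqP; rewrite eqn_leq lt_sx andbT -{1}[x]ssx lenSM.
have [eta_ws | not_eta_ws] := boolP (eta w s); first by right; apply: desc.
by left; rewrite desc ?ssx // etaM eta_gen // mulVg mul1g (negbTE not_eta_ws).
Qed.

Lemma exchange s ws : s \in S -> all (mem S) ws -> size ws = len (wprod ws) ->
  len (s * wprod ws) < len (wprod ws) ->
  exists2 j, j < size ws & s * wprod ws = wprod (rem_nth j ws).
Proof.
move=> Ss S_ws red_ws; rewrite -eta_descent // eta_reduced // => refl_s.
exists (index s (reflections ws)); first by rewrite -size_reflections index_mem.
by rewrite -reflections_rem_nth ?nth_index // -size_reflections index_mem.
Qed.

Lemma reduced_word_gen J x : J \subset S -> x \in <<J>> ->
  exists ws, [/\ all (mem J) ws, wprod ws = x & size ws = len x].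
Proof.
move=> /subsetP sJS /gen_wprod[vs J_vs <-]; elim: vs J_vs => [|s vs IH] /=.
  by exists [::]; rewrite len1.
case/andP=> Js /IH[ws [J_ws ws_vs red_ws]]; rewrite -ws_vs in red_ws *.
have Ss := sJS s Js.
have S_ws : all (mem S) ws := sub_all sJS J_ws.
have [len_up | len_down] := len_mulS (wprod ws) Ss.
  by exists (s :: ws); rewrite /= Js J_ws len_up red_ws.
have [|j lt_j sws] := exchange Ss S_ws red_ws; first by rewrite len_down.
rewrite sws in len_down *; exists (rem_nth j ws); split; rewrite ?all_rem_nth //.
by rewrite size_rem_nth // red_ws len_down.
Qed.

Lemma gen_mem_gen J s : J \subset S -> s \in S -> s \in <<J>> -> s \in J.
Proof.
move=> sJS Ss /(reduced_word_gen sJS)[[|a [|b ws]] []] //; rewrite len_gen //.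
by rewrite /= mulg1 andbT => Ja <-.
Qed.

Lemma reduced_word_sub J ws : J \subset S -> all (mem S) ws ->
  size ws = len (wprod ws) -> wprod ws \in <<J>> -> all (mem J) ws.
Proof.
move=> sJS; elim: ws => [|s ws IH] //= S_sws red_sws J_sws; have /andP[Ss S_ws] := S_sws.
have red_ws := reduced_behead S_sws red_sws.
have [vs [J_vs vs_sws red_vs]] := reduced_word_gen sJS J_sws; rewrite -vs_sws in red_vs.
have [|j lt_j s_vs] := exchange Ss (sub_all (subsetP sJS) J_vs) red_vs.
  by rewrite vs_sws mulgA SV // mul1g -red_ws -red_sws.
have J_s : s \in <<J>>.
  by rewrite -[s](mulgK (wprod vs)) groupM ?groupV ?s_vs ?wprod_gen ?all_rem_nth.
rewrite (gen_mem_gen sJS) //=; apply: IH => //.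
by rewrite -[wprod ws](mulKg s) (invS Ss) groupM.
Qed.

Lemma exchange_cat s x y : s \in S -> len (x * y) = len x + len y ->
  len (s * (x * y)) < len (x * y) ->
  len (s * x) < len x \/ exists2 y', s * (x * y) = x * y' & len y' < len y.
Proof.
move=> Ss len_xy lt_sxy.
have [xs [S_xs xs_x red_xs]] := reduced_word x.
have [ys [S_ys ys_y red_ys]] := reduced_word y; subst x y.
have S_xys : all (mem S) (xs ++ ys) by rewrite all_cat S_xs.
have red_xys : size (xs ++ ys) = len (wprod (xs ++ ys)).
  by rewrite wprod_cat size_cat red_xs red_ys len_xy.
have [|j lt_j] := exchange Ss S_xys red_xys; first by rewrite wprod_cat.
rewrite rem_nth_cat; case: ifP => [lt_jx | ge_jx] sxy.
  left; have sx : s * wprod xs = wprod (rem_nth j xs).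
    by apply: (mulIg (wprod ys)); rewrite -wprod_cat -sxy wprod_cat mulgA.
  by rewrite sx -red_xs len_rem_nth.
right; exists (wprod (rem_nth (j - size xs) ys)).
  by rewrite -[RHS]wprod_cat -sxy wprod_cat.
by rewrite -red_ys len_rem_nth // ltn_subLR -?size_cat // leqNgt ge_jx.
Qed.

Definition coset_minimal J w := forall v, v \in <<J>> -> len w <= len (v * w).

Lemma len_coset_minimal J w v : J \subset S -> coset_minimal J w -> v \in <<J>> ->
  len (v * w) = len v + len w.
Proof.
move=> sJS w_min /(reduced_word_gen sJS)[vs [J_vs vs_v red_vs]]; subst v.
elim: vs J_vs red_vs => [_ _ | s vs IH]; first by rewrite mul1g len1.
move=> J_svs red_svs; have /andP[Js J_vs] := J_svs.
have S_svs := sub_all (subsetP sJS) J_svs; have red_vs := reduced_behead S_svs red_svs.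
have Ss := subsetP sJS s Js; rewrite /= in red_svs *; rewrite -red_svs -mulgA.
have len_vsw : len (wprod vs * w) = len (wprod vs) + len w := IH J_vs red_vs.
have [-> | len_down] := len_mulS (wprod vs * w) Ss; first by rewrite len_vsw red_vs.
have [| lt_svs | [w' sw' lt_w']] := exchange_cat Ss len_vsw; first by rewrite len_down.
  by move: lt_svs; rewrite -red_svs -red_vs ltnNge leqnSn.
have w'E : w' = (wprod vs)^-1 * s * wprod vs * w.
  by apply: (mulgI (wprod vs)); rewrite -sw' !mulgA mulgV mul1g.
have : len w <= len w' by rewrite w'E w_min // !groupM ?groupV ?wprod_gen ?mem_gen.
by rewrite leqNgt lt_w'.
Qed.

Lemma mem_gen_coset_minimal J J' a b : J \subset S -> J' \subset S ->
  a \in <<J>> -> b \in <<J'>> -> coset_minimal J (a * b) -> a * b \in <<J'>>.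
Proof.
move=> sJS sJ'S Ja J'b ab_min; have Ja' : a^-1 \in <<J>> by rewrite groupV.
have [as_ [J_as as_a red_as]] := reduced_word_gen sJS Ja'.
have [ws [S_ws ws_ab red_ws]] := reduced_word (a * b).
have S_asws : all (mem S) (as_ ++ ws) by rewrite all_cat (sub_all (subsetP sJS) J_as).
have asws_b : wprod (as_ ++ ws) = b by rewrite wprod_cat as_a ws_ab mulKg.
have red_asws : size (as_ ++ ws) = len (wprod (as_ ++ ws)).
  by rewrite asws_b size_cat red_as red_ws -(len_coset_minimal sJS ab_min Ja') mulKg.
have := reduced_word_sub sJ'S S_asws red_asws; rewrite asws_b all_cat.
by case/(_ J'b)/andP=> _; rewrite -ws_ab; apply: wprod_gen.
Qed.

Definition longest w := forall v, len v <= len w.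

Lemma longest_unique w0 w1 : longest w0 -> longest w1 -> w0 = w1.
Proof.
move=> w0_max w1_max; set x := w0^-1 * w1; have w1E : w1 = w0 * x by rewrite mulKVg.
have [[|s ws] [S_sws x_E red_x]] := reduced_word x; first by rewrite w1E -x_E mulg1.
have /andP[Ss _] := S_sws; rewrite -x_E in red_x.
have eta_xs : eta x s by rewrite -x_E eta_reduced ?mem_head.
set t := w0 * s * w0^-1; have tw0 : t * w0 = w0 * s by rewrite mulgKV.
have lt_tw0 : len (t * w0) < len w0.
  rewrite tw0 -lenV invMg (invS Ss) -(lenV w0).
  case: (len_mulS w0^-1 Ss) => [len_up | ->] //.
  by have := w0_max (s * w0^-1); rewrite len_up lenV ltnn.
have eta_w0t : eta w0 t.
  by apply: contraLR lt_tw0 => /(eta_gt Ss)/ltnW; rewrite leqNgt.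
have not_eta_w1t : ~~ eta w1 t.
  by rewrite w1E etaM eta_w0t /t !mulgA mulVg mul1g mulgKV eta_xs.
by have := eta_gt Ss not_eta_w1t; rewrite ltnNge w1_max.
Qed.

Lemma mem_gen_bigcap (I : finType) (J : I -> {set W}) x :
  (forall i, J i \subset S) -> (forall i, x \in <<J i>>) -> x \in <<S :&: \bigcap_i J i>>.
Proof.
move=> sJS J_x; have [ws [S_ws ws_x red_ws]] := reduced_word x; subst x.
apply: wprod_gen; apply/allP=> y ws_y; apply/setIP; split.
  exact: (allP S_ws).
apply/bigcapP=> i _.
by have /allP := reduced_word_sub (sJS i) S_ws red_ws (J_x i); apply.
Qed.

Section Building.
Variables (Ch : Type) (delta : Ch -> Ch -> W).
Hypothesis delta_eq1 : forall C D, delta C D = 1 <-> C = D.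
Hypothesis deltaS : forall C D C' s, s \in S -> delta C' C = s ->
  (delta C' D = s * delta C D \/ delta C' D = delta C D) /\
  (len (s * delta C D) = (len (delta C D)).+1 -> delta C' D = s * delta C D).
Hypothesis deltaS_ex : forall C D s, s \in S ->
  exists C', delta C' C = s /\ delta C' D = s * delta C D.

Lemma deltaxx C : delta C C = 1.
Proof. exact/delta_eq1. Qed.

(* Stated for an arbitrary third chamber Z so that the induction along the
   word goes through; Z := X gives deltaV. *)
Lemma delta_len_add ws X D Z : all (mem S) ws -> delta X D = wprod ws ->
  len ((wprod ws)^-1 * delta X Z) = size ws + len (delta X Z) ->
  delta D Z = (wprod ws)^-1 * delta X Z.
Proof.
elim: ws X => [|s ws IH] X /=; first by move=> _ /delta_eq1 <-; rewrite invg1 mul1g.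
case/andP=> Ss S_ws XD; set u := delta X Z; rewrite invMg (invS Ss) -mulgA => len_add.
have [X1 [X1X X1D]] := deltaS_ex X D Ss; rewrite XD mulgA SV // mul1g in X1D.
have len_su : len (s * u) = (len u).+1.
  apply/eqP; rewrite eqn_leq lenSM //= -(leq_add2l (size ws)) -addSnnS -len_add.
  by rewrite (leq_trans (lenM _ _)) // leq_add2r lenV len_wprod.
have X1Z : delta X1 Z = s * u by apply: (deltaS Z Ss X1X).2.
by rewrite -X1Z; apply: IH; rewrite // X1Z len_su addnS len_add.
Qed.

Lemma deltaV C D : delta D C = (delta C D)^-1.
Proof.
have [ws [S_ws ws_CD red_ws]] := reduced_word (delta C D).
have := delta_len_add (Z := C) S_ws (esym ws_CD); rewrite deltaxx !mulg1 ws_CD; apply.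
by rewrite lenV len1 addn0 red_ws.
Qed.

Lemma delta_adjacent X Y Y' s : s \in S -> delta Y Y' = s ->
  delta X Y' = delta X Y \/ delta X Y' = delta X Y * s.
Proof.
move=> Ss YY'; have Y'Y : delta Y' Y = s by rewrite deltaV YY' invS.
have [[XY' | XY'] _] := deltaS X Ss Y'Y; rewrite [delta X Y']deltaV XY'.
  by right; rewrite invMg (invS Ss) -deltaV.
by left; rewrite -deltaV.
Qed.

Lemma delta_coset J X Y Z : J \subset S -> delta Y Z \in <<J>> ->
  (delta X Y)^-1 * delta X Z \in <<J>>.
Proof.
move=> /subsetP sJS /gen_wprod[ws J_ws /esym]; elim: ws Y J_ws => [|s ws IH] Y /=.
  by move=> _ /delta_eq1 ->; rewrite mulVg group1.
case/andP=> Js J_ws YZ; have [Y1 [Y1Y Y1Z]] := deltaS_ex Y Z (sJS s Js).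
rewrite YZ mulgA SV ?sJS // mul1g in Y1Z; have := IH Y1 J_ws Y1Z.
have YY1 : delta Y Y1 = s by rewrite deltaV Y1Y invS ?sJS.
have [-> // | ->] := delta_adjacent X (sJS s Js) YY1.
rewrite invMg -mulgA -{2}(mulKVg s ((delta X Y)^-1 * _)).
exact/groupM/mem_gen.
Qed.

Lemma residue_trans J X Y Z : J \subset S ->
  delta X Y \in <<J>> -> delta Y Z \in <<J>> -> delta X Z \in <<J>>.
Proof. by move=> sJS XY /(delta_coset X sJS); rewrite groupMl ?groupV. Qed.

Lemma residue_sym J X Y : delta X Y \in <<J>> -> delta Y X \in <<J>>.
Proof. by rewrite deltaV groupV. Qed.

Lemma residue_realize J v X Z : J \subset S -> v \in <<J>> ->
  exists E, delta X E \in <<J>> /\ delta E Z = v * delta X Z.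
Proof.
move=> /subsetP sJS /gen_wprod[ws J_ws <-]; elim: ws J_ws => [|s ws IH] /=.
  by exists X; rewrite deltaxx group1 mul1g.
case/andP=> Js /IH[E [XE EZ]]; have [E' [E'E E'Z]] := deltaS_ex E Z (sJS s Js).
exists E'; rewrite E'Z EZ mulgA; split=> //.
have EE' : delta E E' = s by rewrite deltaV E'E invS ?sJS.
have [-> // | ->] := delta_adjacent X (sJS s Js) EE'.
by rewrite groupM // mem_gen.
Qed.

Lemma exists_projection J X D : J \subset S ->
  exists F, delta X F \in <<J>> /\ coset_minimal J (delta F D).
Proof.
move=> sJS; set u := delta X D.
have [m Jum m_min] := arg_minnP (fun v => len v) (rcoset_refl <<J>>%G u).
have Jv : m * u^-1 \in <<J>> by rewrite -mem_rcoset.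
have [F [XF FD]] := residue_realize X D sJS Jv; rewrite mulgKV in FD.
exists F; split=> // v Jv'; rewrite FD; apply: m_min.
by change (v * m \in <<J>> :* u); rewrite mem_rcoset -mulgA groupM.
Qed.

Lemma projection_residue J J' X Y D F : J \subset S -> J' \subset S ->
  delta X F \in <<J>> -> coset_minimal J (delta F D) -> delta Y D \in <<J'>> ->
  (exists G, delta X G \in <<J>> /\ delta Y G \in <<J'>>) -> delta Y F \in <<J'>>.
Proof.
move=> sJS sJ'S XF FD_min YD [G [XG YG]].
have FG : delta F G \in <<J>> by apply: residue_trans sJS (residue_sym XF) XG.
have GD : delta G D \in <<J'>> by apply: residue_trans sJ'S (residue_sym YG) YD.
have := mem_gen_coset_minimal sJS sJ'S FG (delta_coset F sJ'S GD); rewrite mulKVg.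
by move/(_ FD_min)/residue_sym; apply: residue_trans sJ'S YD.
Qed.

Lemma exists_chamber_vertices (I : finType) (typ : I -> W) (ch : I -> Ch) (D0 : Ch) :
  (forall i j, exists E,
     has_vertex S delta (typ i) (ch i) E /\ has_vertex S delta (typ j) (ch j) E) ->
  exists D, forall i, has_vertex S delta (typ i) (ch i) D.
Proof.
move=> adj.
suff [D HD] : exists D, forall i, i \in enum I -> has_vertex S delta (typ i) (ch i) D.
  by exists D => i; apply: HD; rewrite mem_enum.
elim: (enum I) => [|k l [D HD]]; first by exists D0.
have sJS i : S :\ typ i \subset S := subD1set S (typ i).
have [F [kF F_min]] := exists_projection (ch k) D (sJS k).
exists F => i; rewrite inE => /predU1P[-> // | li].
exact: projection_residue (sJS k) (sJS i) kF F_min (HD i li) (adj k i).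
Qed.

Lemma Opp_flag C : Opp_is_flag S delta C.
Proof.
(* The types need not be assumed in S: S :\ s \subset S for every s. *)
move=> I typ ch _ adjO; have sJS i : S :\ typ i \subset S := subD1set S (typ i).
have [D HD] : exists D, forall i, has_vertex S delta (typ i) (ch i) D.
  by apply: (exists_chamber_vertices C) => i j; have [E [_ ijE]] := adjO i j; exists E.
have [w0 _ w0_max] := @arg_maxnP W 1 predT (fun w => len w) isT.
set v := w0^-1 * delta C D.
have Kv : v \in <<S :&: \bigcap_i (S :\ typ i)>>.
  apply: mem_gen_bigcap => // i; have [E [CE [iE _]]] := adjO i i.
  have DE := residue_trans (sJS i) (residue_sym (HD i)) iE.
  have := delta_coset C (sJS i) DE; rewrite (longest_unique CE (fun w => w0_max w isT)).
  by rewrite -groupV invMg invgK.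
have [E [DE EC]] := residue_realize D C (subsetIl _ _) Kv.
exists E; split.
  rewrite /opposite [delta C E]deltaV EC /v [delta D C]deltaV mulgK invgK.
  by move=> w; apply: w0_max.
move=> i; apply: residue_trans (sJS i) (HD i) _.
by apply: subsetP DE; apply/genS/subIset; rewrite bigcap_inf ?orbT.
Qed.

End Building.
End TitsRepresentation.
End CoxeterSystem.

Theorem lemma4p12 (W : finGroupType) (S : {set W}) (Ch : Type)
    (delta : Ch -> Ch -> W) (C : Ch) :
  coxeter_system S -> is_building S delta -> Opp_is_flag S delta C.
Proof.
case=> S1 SV Sgen univ [delta_eq1 deltaS deltaS_ex].
have perm_group : is_group *%g 1 (fun p : {perm W * bool} => p^-1).
  by split; [exact: mulgA | exact: mul1g | exact: mulg1 | exact: mulVg | exact: mulgV].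
have [phi [phiM phiS]] := univ _ _ _ _ perm_group (@tits W)
  (fun s t Ss St => etrans (gpowE _ _) (tits_braid SV Ss St)).
exact: (Opp_flag S1 SV Sgen phiM phiS delta_eq1 deltaS deltaS_ex (C := C)).
Qed.
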